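(* Let $\mathcal{L}=(L,\leq)$ be an arbitrary finite lattice and $(\mathcal{L},\mathcal{L}_f,f)$ a lattice reduction triple. Let $M=\langle \mathrm{Agt},Q,Act,d,t,AP,V,\mathcal{L}^+\rangle$ be an mv-CGS over an interpreted lattice $\mathcal{L}^+=(L,\leq,\sigma)$, and let $f(M)=\langle \mathrm{Agt},Q,Act,d,t,AP,V_f,(L_f,\leq_f,\sigma_f)\rangle$ be the image of $M$ under $f$. Then, for any state (respectively, path) formula $\varphi$ of mv-ATL* over $\mathcal{L}$ and any state (respectively, path) $\xi$: $[\![\varphi]\!]_{M,\xi}\in f^{-1}(x)$ iff $[\![\varphi]\!]_{f(M),\xi}=x$.
   Context: Let $\mathcal{L}=(L,\leq)$ be a finite lattice with meet $\sqcap$, join $\sqcup$, least element $\bot$ and greatest element $\top$; for a family of elements, $\inf$ denotes its greatest lower bound (lattice meet) and $\bigsqcup$ its least upper bound (lattice join). Given a countable set $\mathcal{C}$ of constant symbols, an interpreted lattice is $\mathcal{L}^+=(L,\leq,\sigma)$ with $\sigma:\mathcal{C}\to L$. A multi-valued concurrent game structure (mv-CGS) over $\mathcal{L}^+$ is $M=\langle \mathrm{Agt},Q,Act,d,t,AP,V,\mathcal{L}^+\rangle$ where $\mathrm{Agt},Q,Act,AP$ are nonempty finite sets of agents, states, actions and atomic propositions, $d:\mathrm{Agt}\times Q\to 2^{Act}\setminus\{\emptyset\}$ gives the available actions, $t$ is a deterministic transition function assigning a successor $t(q,\alpha_1,\dots,\alpha_k)$ to each state $q$ and each tuple of actions available at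 $q$ (one per agent), and $V:AP\times Q\to L$ is a multi-valued valuation. A path $\lambda=q_0q_1\dots$ is an infinite sequence of states with transitions between consecutive states; $\lambda[i]$ is its $i$-th state and $\lambda[i..\infty]$ its suffix. A (perfect recall) strategy of agent $a$ is $s_a:Q^+\to Act$ with $s_a(q_0\dots q_n)\in d(a,q_n)$; collective strategies $s_A$ for $A\subseteq\mathrm{Agt}$ are tuples of individual strategies, $\Sigma_A$ is their set, and $out(q,s_A)$ is the set of paths from $q$ consistent with $s_A$. Formulas of mv-ATL*$_\to$: state formulas $\varphi::=c\mid p\mid\varphi\wedge\varphi\mid\varphi\vee\varphi\mid\varphi\to\varphi\mid\langle\!\langle A\rangle\!\rangle\gamma\mid[\![A]\!]\gamma$, path formulas $\gamma::=\varphi\mid\gamma\wedge\gamma\mid\gamma\vee\gamma\mid X\gamma\mid\gamma U\gamma\mid\gamma W\gamma$ ($c\in\mathcal{C}$, $p\in AP$, $A\subseteq\mathrm{Agt}$); mv-ATL* is the fragment without $\to$. Semantics: $[\![c]\!]_{M,q}=\sigma(c)$; $[\![p]\!]_{M,q}=V(p,q)$; $\wedge,\vee$ are interpreted by $\sqcap,\sqcup$ (for state and path formulas); $[\![\varphi]\!]_{M,\lambda}=[\![\varphi]\!]_{M,\lambda[0]}$; $[\![X\gamma]\!]_{M,\lambda}=[\![\gamma]\!]_{M,\lambda[1..\infty]}$; $[\![\gamma_1U\gamma_2]\!]_{M,\lambda}=\bigsqcup_{i\ge 0}\inf_{0\le j<i}\{[\![\gamma_2]\!]_{M,\lambda[i..\infty]}\sqcap[\![\gamma_1]\!]_{M,\lambda[j..\infty]}\}$;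 $[\![\gamma_1W\gamma_2]\!]_{M,\lambda}=\inf_{i\ge0}[\![\gamma_1]\!]_{M,\lambda[i..\infty]}\sqcup[\![\gamma_1U\gamma_2]\!]_{M,\lambda}$; $[\![\langle\!\langle A\rangle\!\rangle\gamma]\!]_{M,q}=\bigsqcup_{s_A\in\Sigma_A}\inf_{\lambda\in out(q,s_A)}[\![\gamma]\!]_{M,\lambda}$; $[\![[\![A]\!]\gamma]\!]_{M,q}=\inf_{s_A\in\Sigma_A}\bigsqcup_{\lambda\in out(q,s_A)}[\![\gamma]\!]_{M,\lambda}$; $[\![\varphi_1\to\varphi_2]\!]_{M,q}=\top$ if $[\![\varphi_1]\!]_{M,q}\le[\![\varphi_2]\!]_{M,q}$ and $\bot$ otherwise. A lattice reduction triple (LRT) is $(\mathcal{L},\mathcal{L}_f,f)$ where $\mathcal{L}_f=(L_f,\leq_f)$ is a sublattice of $\mathcal{L}$ and $f:L\to L_f$ preserves arbitrary bounds: $f(\inf_{i\in I}x_i)=\inf_{i\in I}f(x_i)$ and $f(\bigsqcup_{i\in I}x_i)=\bigsqcup_{i\in I}f(x_i)$ for any index set $I$. The image $f(M)$ of $M$ under $f$ has the same agents, states, actions, availability, transitions and propositions, valuation $V_f(p,q)=f(V(p,q))$, and interpreted lattice $(L_f,\leq_f,\sigma_f)$ with $\sigma_f(c)=f(\sigma(c))$. *)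

From HB Require Import structures.
From mathcomp Require Import all_boot all_order.
From mathcomp Require Import boolp.

Set Implicit Arguments.
Unset Strict Implicit.
Unset Printing Implicit Defensive.

Import Order.TTheory.
Local Open Scope order_scope.

Definition Inf {disp : Order.disp_t} {T : finTBLatticeType disp} {I : Type}
  (P : I -> Prop) (g : I -> T) : T :=
  \meet_(x : T | `[< exists i, P i /\ g i = x >]) x.

Definition Sup {disp : Order.disp_t} {T : finTBLatticeType disp} {I : Type}
  (P : I -> Prop) (g : I -> T) : T :=
  \join_(x : T | `[< exists i, P i /\ g i = x >]) x.

Record mvCGS (Agt Q Act AP : finType) (C : countType)
    (disp : Order.disp_t) (T : finTBLatticeType disp) := MvCGS {
  agt_ne : 0 < #|Agt|;
  st_ne : 0 < #|Q|;
  act_ne : 0 < #|Act|;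
  ap_ne : 0 < #|AP|;
  avail : Agt -> Q -> {set Act};
  avail_ne : forall a q, avail a q != set0;
  trans : Q -> {ffun Agt -> Act} -> Q;
  val : AP -> Q -> T;
  interp : C -> T
}.

Definition imageCGS (Agt Q Act AP : finType) (C : countType)
    (disp dispf : Order.disp_t) (T : finTBLatticeType disp)
    (Tf : finTBLatticeType dispf) (f : T -> Tf)
    (M : mvCGS Agt Q Act AP C T) : mvCGS Agt Q Act AP C Tf :=
  @MvCGS Agt Q Act AP C dispf Tf (agt_ne M) (st_ne M) (act_ne M) (ap_ne M)
    (avail M) (@avail_ne _ _ _ _ _ _ _ M) (trans M)
    (fun p q => f (val M p q)) (fun c => f (interp M c)).

Inductive sform (Agt AP : finType) (C : countType) : Type :=
  | SConst of C
  | SAtom of AP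
  | SAnd of sform Agt AP C & sform Agt AP C
  | SOr of sform Agt AP C & sform Agt AP C
  | SCoop of {set Agt} & pform Agt AP C
  | SDual of {set Agt} & pform Agt AP C
with pform (Agt AP : finType) (C : countType) : Type :=
  | PState of sform Agt AP C
  | PAnd of pform Agt AP C & pform Agt AP C
  | POr of pform Agt AP C & pform Agt AP C
  | PX of pform Agt AP C
  | PU of pform Agt AP C & pform Agt AP C
  | PW of pform Agt AP C & pform Agt AP C.

Section Semantics.
Variables (Agt Q Act AP : finType) (C : countType).
Variables (disp : Order.disp_t) (T : finTBLatticeType disp).
Variable M : mvCGS Agt Q Act AP C T.

Definition isPath (lam : nat -> Q) : Prop :=
  forall i, exists alpha : {ffun Agt -> Act},
    (forall a, alpha a \in avail M a (lam i)) /\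
    lam i.+1 = trans M (lam i) alpha.

Definition suffix (lam : nat -> Q) (i : nat) : nat -> Q := fun n => lam (i + n).

(* A (perfect recall) collective strategy for A: for each a in A, a map from
   nonempty histories (encoded as rcons h q, with last state q) to actions
   available at the last state. Components outside A are irrelevant. *)
Definition isStrat (A : {set Agt}) (s : Agt -> seq Q -> Act) : Prop :=
  forall a, a \in A -> forall h q, s a (rcons h q) \in avail M a q.

Definition out (q : Q) (A : {set Agt}) (s : Agt -> seq Q -> Act)
    (lam : nat -> Q) : Prop :=
  lam 0 = q /\
  forall i, exists alpha : {ffun Agt -> Act},
    (forall a, alpha a \in avail M a (lam i)) /\
    (forall a, a \in A -> alpha a = s a (mkseq lam i.+1)) /\
    lam i.+1 = trans M (lam i) alpha.

Fixpoint ssem (phi : sform Agt AP C) (q : Q) {struct phi} : T :=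
  match phi with
  | SConst c => interp M c
  | SAtom p => val M p q
  | SAnd p1 p2 => ssem p1 q `&` ssem p2 q
  | SOr p1 p2 => ssem p1 q `|` ssem p2 q
  | SCoop A g => Sup (isStrat A)
      (fun s => Inf (out q A s) (fun lam => psem g lam))
  | SDual A g => Inf (isStrat A)
      (fun s => Sup (out q A s) (fun lam => psem g lam))
  end
with psem (g : pform Agt AP C) (lam : nat -> Q) {struct g} : T :=
  match g with
  | PState phi => ssem phi (lam 0)
  | PAnd g1 g2 => psem g1 lam `&` psem g2 lam
  | POr g1 g2 => psem g1 lam `|` psem g2 lam
  | PX g1 => psem g1 (suffix lam 1)
  | PU g1 g2 => Sup (fun _ : nat => True) (fun i =>
        psem g2 (suffix lam i) `&`
        Inf (fun j : nat => (j < i)%N) (fun j => psem g1 (suffix lam j)))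
  | PW g1 g2 =>
        Inf (fun _ : nat => True) (fun i => psem g1 (suffix lam i)) `|`
        Sup (fun _ : nat => True) (fun i =>
        psem g2 (suffix lam i) `&`
        Inf (fun j : nat => (j < i)%N) (fun j => psem g1 (suffix lam j)))
  end.

End Semantics.

(* Every connective of mv-ATL* is interpreted by a meet or a join, binary
   ([/\], [\/]) or over an arbitrary family (strategies, paths, positions).
   A map preserving arbitrary bounds therefore commutes with the semantics,
   by mutual induction on state and path formulas: f ([[phi]]_M) equals
   [[phi]]_f(M) at every state and on every path. *)
From HB Require Import structures.
From mathcomp Require Import all_boot all_order.
From mathcomp Require Import boolp.

Set Implicit Arguments.
Unset Strict Implicit.
Unset Printing Implicit Defensive.

Import Order.TTheory.
Local Open Scope order_scope.

Scheme sform_ind2 := Induction for sform Sort Prop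
  with pform_ind2 := Induction for pform Sort Prop.
Combined Scheme sform_pform_ind from sform_ind2, pform_ind2.

Definition values {disp : Order.disp_t} {T : finTBLatticeType disp} {I : Type}
    (P : I -> Prop) (g : I -> T) : {set T} :=
  [set x | `[< exists i, P i /\ g i = x >]].

Section FamilyBounds.
Variables (disp : Order.disp_t) (T : finTBLatticeType disp).

Lemma InfE (I : Type) (P : I -> Prop) (g : I -> T) :
  Inf P g = \meet_(x in values P g) x.
Proof. by rewrite big_set. Qed.

Lemma SupE (I : Type) (P : I -> Prop) (g : I -> T) :
  Sup P g = \join_(x in values P g) x.
Proof. by rewrite big_set. Qed.

Lemma values_comp (dispf : Order.disp_t) (Tf : finTBLatticeType dispf)
    (h : T -> Tf) (I : Type) (P : I -> Prop) (g : I -> T) :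
  values P (fun i => h (g i)) = h @: values P g.
Proof.
apply/setP => y; rewrite inE; apply/asboolP/imsetP.
  by case=> i [Pi <-]; exists (g i); rewrite // inE; apply/asboolP; exists i.
by case=> _ /[!inE] /asboolP [i [Pi <-]] ->; exists i.
Qed.

Lemma meets_set2 (x y : T) : \meet_(z in [set x; y]) z = x `&` y.
Proof. by rewrite meets_setU !big_set1. Qed.

Lemma joins_set2 (x y : T) : \join_(z in [set x; y]) z = x `|` y.
Proof. by rewrite joins_setU !big_set1. Qed.

End FamilyBounds.

Section BoundPreserving.
Variables (disp dispf : Order.disp_t) (L : finTBLatticeType disp)
  (Lf : finTBLatticeType dispf) (f : L -> Lf).
Hypothesis f_inf : forall X : {set L}, f (\meet_(x in X) x) = \meet_(x in X) f x.
Hypothesis f_sup : forall X : {set L}, f (\join_(x in X) x) = \join_(x in X) f x.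

Lemma f_Inf (I : Type) (P : I -> Prop) (g : I -> L) :
  f (Inf P g) = Inf P (fun i => f (g i)).
Proof. by rewrite !InfE f_inf values_comp big_imset_idem //; apply: meetxx. Qed.

Lemma f_Sup (I : Type) (P : I -> Prop) (g : I -> L) :
  f (Sup P g) = Sup P (fun i => f (g i)).
Proof. by rewrite !SupE f_sup values_comp big_imset_idem //; apply: joinxx. Qed.

Lemma f_meet (x y : L) : f (x `&` y) = f x `&` f y.
Proof.
by rewrite -meets_set2 f_inf meets_setU !big_set1.
Qed.

Lemma f_join (x y : L) : f (x `|` y) = f x `|` f y.
Proof.
by rewrite -joins_set2 f_sup joins_setU !big_set1.
Qed.

Variables (Agt Q Act AP : finType) (C : countType) (M : mvCGS Agt Q Act AP C L).

Lemma sem_imageCGS :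
  (forall (phi : sform Agt AP C) q, f (ssem M phi q) = ssem (imageCGS f M) phi q) /\
  (forall (g : pform Agt AP C) lam, f (psem M g lam) = psem (imageCGS f M) g lam).
Proof.
apply: sform_pform_ind => //=.
- by move=> p1 IH1 p2 IH2 q; rewrite f_meet IH1 IH2.
- by move=> p1 IH1 p2 IH2 q; rewrite f_join IH1 IH2.
- move=> A g IH q; rewrite f_Sup; congr Sup; apply: funext => s.
  by rewrite f_Inf; congr Inf; apply: funext => lam.
- move=> A g IH q; rewrite f_Inf; congr Inf; apply: funext => s.
  by rewrite f_Sup; congr Sup; apply: funext => lam.
- by move=> g1 IH1 g2 IH2 lam; rewrite f_meet IH1 IH2.
- by move=> g1 IH1 g2 IH2 lam; rewrite f_join IH1 IH2.
- move=> g1 IH1 g2 IH2 lam; rewrite f_Sup; congr Sup; apply: funext => i.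
  by rewrite f_meet IH2 f_Inf; congr (_ `&` Inf _ _); apply: funext => j.
- move=> g1 IH1 g2 IH2 lam; rewrite f_join f_Inf f_Sup.
  congr (_ `|` _); first by congr Inf; apply: funext => i.
  congr Sup; apply: funext => i.
  by rewrite f_meet IH2 f_Inf; congr (_ `&` Inf _ _); apply: funext => j.
Qed.

End BoundPreserving.

Theorem theorem5p4
  (disp dispf : Order.disp_t) (L : finTBLatticeType disp)
  (Lf : finTBLatticeType dispf)
  (* L_f is a sublattice of L: identified with its image under a lattice
     embedding emb *)
  (emb : Lf -> L) (emb_inj : injective emb)
  (emb_meet : forall x y : Lf, emb (x `&` y) = emb x `&` emb y)
  (emb_join : forall x y : Lf, emb (x `|` y) = emb x `|` emb y)
  (* f preserves arbitrary bounds *)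
  (f : L -> Lf)
  (f_inf : forall X : {set L}, f (\meet_(x in X) x) = \meet_(x in X) f x)
  (f_sup : forall X : {set L}, f (\join_(x in X) x) = \join_(x in X) f x)
  (Agt Q Act AP : finType) (C : countType)
  (M : mvCGS Agt Q Act AP C L) :
  (forall (phi : sform Agt AP C) (q : Q) (x : Lf),
      f (ssem M phi q) = x <-> ssem (imageCGS f M) phi q = x) /\
  (forall (g : pform Agt AP C) (lam : nat -> Q), isPath M lam ->
    forall x : Lf,
      f (psem M g lam) = x <-> psem (imageCGS f M) g lam = x).
Proof.
have [sem_state sem_path] := sem_imageCGS f_inf f_sup M.
by split=> [phi q x | g lam _ x]; rewrite ?sem_state ?sem_path.
Qed.
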